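(* Let $n=p_1p_2\cdots p_r$, where $p_1,\ldots,p_r$ are distinct primes, and let $a,b$ be two distinct proper divisors of $n$ (i.e. divisors not in $\{1,n\}$) such that $a/b=p_k/p_l$ for some $k,l\in\{1,\ldots,r\}$. If $a<b$, then $\deg(a)>\deg(b)$ in $\mathcal{P}(C_n)$.
   Context: For a finite group $G$, the power graph $\mathcal{P}(G)$ is the simple undirected graph with vertex set $G$ in which two distinct vertices are adjacent if one is an integral power of the other. $C_n$ denotes the cyclic group of order $n$, identified with $\mathbb{Z}_n=\{0,1,\ldots,n-1\}$, so a divisor $d<n$ of $n$ is regarded as the element $d\in\mathbb{Z}_n$. $\deg(a)$ is the degree of vertex $a$ in $\mathcal{P}(C_n)$. *)

From mathcomp Require Import all_boot.
Set Implicit Arguments. Unset Strict Implicit. Unset Printing Implicit Defensive.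

(* The cyclic group C_n is identified with Z_n = {0,...,n-1} (additive).
   An integral power of x is, additively, a multiple m*x mod n with m in Z;
   since n*x = 0, the multiples k*x mod n with 0 <= k < n are all of them. *)
Definition is_power (n x y : nat) : bool :=
  [exists k : 'I_n, y == (k * x) %% n].

Definition pg_adj (n x y : nat) : bool :=
  (x != y) && (is_power n x y || is_power n y x).

Definition pg_deg (n a : nat) : nat :=
  #|[set y : 'I_n | pg_adj n a y]|.

From mathcomp Require Import all_boot.
From mathcomp Require Import zify.

(* In Z_n, for a divisor x of n, the neighbours of x are the multiples of x
   together with the y whose subgroup <y> = <gcd(y, n)> lies inside <x>, i.e. with
   gcd(y, n) | x; so deg(x) + 1 is the size of the closed neighbourhood N(x).
   Writing a = c p, b = c q and n = p q R with c | R, p < q and p, q, R pairwise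
   coprime, membership of y in N(c p) and N(c q) depends only on the residues of y
   modulo p, q and R.  Via the Chinese remainder theorem we build an injection of
   N(c q) into N(c p) that keeps every point with nonzero q-residue and, for y
   divisible by q, moves the p-residue of y into the q-coordinate; its image misses
   the point with residues (0, q - 1, 1) of N(c p), so |N(c q)| < |N(c p)|. *)

Lemma dvdn_modn d m n : d %| n -> (d %| m %% n) = (d %| m).
Proof. by move=> dvd_dn; rewrite /dvdn modn_dvdm. Qed.

Lemma is_power_divisor n x y :
  x %| n -> y < n -> is_power n x y = (x %| y).
Proof.
move=> dvd_xn lt_yn; apply/existsP/idP => [[k /eqP ->]|dvd_xy].
  by rewrite dvdn_modn // dvdn_mull.
have lt_yx_n : y %/ x < n by apply: leq_ltn_trans (leq_div y x) lt_yn.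
by exists (Ordinal lt_yx_n); rewrite /= divnK // modn_small.
Qed.

(* x is a power of y in Z_n iff x lies in the subgroup generated by y,
   which is the subgroup of multiples of gcd(y, n). *)
Lemma is_power_gcd n x y : x < n -> is_power n y x = (gcdn y n %| x).
Proof.
move=> lt_xn; have n_gt0 : 0 < n by apply: leq_ltn_trans lt_xn.
apply/existsP/idP => [[k /eqP ->]|/dvdnP [t def_x]].
  by rewrite dvdn_modn ?dvdn_gcdr // dvdn_mull ?dvdn_gcdl.
have [y0|y_gt0] := posnP y.
  have x0 : x = 0 by move: lt_xn; rewrite def_x y0 gcd0n; case: t {def_x}; lia.
  by exists (Ordinal n_gt0); rewrite /= x0 y0 muln0 mod0n.
(* Bezout: km * y = kn * n + gcd(y, n), so (km * t) * y = x modulo n. *)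
have [km kn bezout _] := egcdnP n y_gt0.
exists (Ordinal (ltn_pmod (km * t) n_gt0)) => /=.
rewrite modnMml mulnAC bezout mulnDl mulnAC modnMDl.
by rewrite mulnC -def_x modn_small.
Qed.

(* The closed neighbourhood of x in P(C_n): x itself and all its neighbours. *)
Definition pg_nbhd (n x : nat) : {set 'I_n} :=
  [set y : 'I_n | (x %| y) || (gcdn y n %| x)].

Lemma card_pg_nbhd n x : x %| n -> x < n -> #|pg_nbhd n x| = (pg_deg n x).+1.
Proof.
move=> dvd_xn lt_xn; rewrite (cardsD1 (Ordinal lt_xn)) inE /= dvdnn add1n; congr _.+1.
apply: eq_card => y; rewrite !inE /pg_adj is_power_divisor // is_power_gcd //.
by rewrite -(inj_eq val_inj) eq_sym.
Qed.

Lemma coprime_prime_prod p r :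
  prime p -> all prime r -> p \notin r -> coprime p (\prod_(t <- r) t).
Proof.
move=> p_pr /allP r_pr p_r; rewrite big_seq; apply: (big_ind (coprime p)) => [|x y|t t_r].
- exact: coprimen1.
- by rewrite coprimeMr => -> ->.
rewrite prime_coprime // dvdn_prime2 ?(r_pr t t_r) //.
by apply: contraNneq p_r => ->.
Qed.

Section ChineseRemainder3.

Variables p q R : nat.
Hypotheses (cop_p_qR : coprime p (q * R)) (cop_qR : coprime q R).

Lemma dvd_p_pqR : p %| p * (q * R). Proof. exact: dvdn_mulr. Qed.
Lemma dvd_q_pqR : q %| p * (q * R). Proof. by rewrite dvdn_mull ?dvdn_mulr. Qed.
Lemma dvd_R_pqR : R %| p * (q * R). Proof. by rewrite !dvdn_mull. Qed.

Definition crt3 (u v w : nat) : nat :=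
  chinese p (q * R) u (chinese q R v w) %% (p * (q * R)).

Lemma crt3_modp u v w : crt3 u v w = u %[mod p].
Proof. by rewrite /crt3 (modn_dvdm _ dvd_p_pqR) chinese_modl. Qed.

Lemma crt3_modq u v w : crt3 u v w = v %[mod q].
Proof.
rewrite /crt3 (modn_dvdm _ dvd_q_pqR) -(modn_dvdm _ (dvdn_mulr R (dvdnn q))).
by rewrite chinese_modr // modn_dvdm ?dvdn_mulr // chinese_modl.
Qed.

Lemma crt3_modR u v w : crt3 u v w = w %[mod R].
Proof.
rewrite /crt3 (modn_dvdm _ dvd_R_pqR) -(modn_dvdm _ (dvdn_mull q (dvdnn R))).
by rewrite chinese_modr // modn_dvdm ?dvdn_mull // chinese_modr.
Qed.

Lemma ltn_crt3 u v w : 0 < p * (q * R) -> crt3 u v w < p * (q * R).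
Proof. exact: ltn_pmod. Qed.

Lemma eqn_mod3 x y : x %% p = y %% p -> x %% q = y %% q -> x %% R = y %% R ->
  x = y %[mod p * (q * R)].
Proof.
move=> eq_p eq_q eq_R; apply/eqP.
by rewrite (chinese_remainder cop_p_qR) (chinese_remainder cop_qR) eq_p eq_q eq_R !eqxx.
Qed.

End ChineseRemainder3.

Section NeighbourhoodResidues.

Variables p q R c : nat.
Hypotheses (p_pr : prime p) (q_pr : prime q) (neq_pq : p != q).
Hypotheses (cop_pR : coprime p R) (cop_qR : coprime q R) (dvd_cR : c %| R).

Lemma dvd_mulp_residues y : (c * p %| y) = (y %% p == 0) && (c %| y %% R).
Proof.
have cop_cp : coprime c p by rewrite coprime_sym (coprime_dvdr dvd_cR).
by rewrite Gauss_dvd // andbC dvdn_modn.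
Qed.

Lemma gcd_dvd_mulp_residues n y : n = p * (q * R) ->
  (gcdn y n %| c * p) = (y %% q != 0) && (gcdn (y %% R) R %| c).
Proof.
move=> ->; rewrite gcdn_modl; apply/idP/andP => [dvd_g_cp|[q_ndvd_y dvd_gR_c]].
  split.
    (* q cannot divide gcd(y, pqR), since q divides neither c nor p. *)
    apply: contraTneq dvd_g_cp => /eqP q_dvd_y; have {}q_dvd_y : q %| y := q_dvd_y.
    have q_dvd_g : q %| gcdn y (p * (q * R)) by rewrite dvdn_gcd q_dvd_y dvd_q_pqR.
    apply/negP => /(dvdn_trans q_dvd_g).
    rewrite Euclid_dvdM // (dvdn_prime2 q_pr p_pr) eq_sym (negPf neq_pq) orbF.
    by move=> q_dvd_c; move: cop_qR; rewrite prime_coprime // (dvdn_trans q_dvd_c dvd_cR).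
  have cop_gRp : coprime (gcdn y R) p.
    by rewrite coprime_sym (coprime_dvdr (dvdn_gcdr y R)).
  rewrite -(Gauss_dvdl _ cop_gRp); apply: dvdn_trans dvd_g_cp.
  by rewrite dvdn_gcd dvdn_gcdl (dvdn_trans (dvdn_gcdr y R)) ?dvd_R_pqR.
(* If q does not divide y, then gcd(y, pqR) divides p * gcd(y, R). *)
have cop_gq : coprime (gcdn y (p * (q * R))) q.
  by rewrite (coprime_dvdl (dvdn_gcdl _ _)) // coprime_sym prime_coprime.
have dvd_g_pR : gcdn y (p * (q * R)) %| p * R.
  by rewrite -(Gauss_dvdr _ cop_gq) mulnCA dvdn_gcdr.
have dvd_g_pgR : gcdn y (p * (q * R)) %| p * gcdn y R.
  by rewrite muln_gcdr dvdn_gcd dvd_g_pR dvdn_mull ?dvdn_gcdl.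
by apply: dvdn_trans dvd_g_pgR _; rewrite mulnC dvdn_mul.
Qed.

Lemma mem_nbhd_mulp n (y : 'I_n) : n = p * (q * R) ->
  (y \in pg_nbhd n (c * p)) =
  ((y %% p == 0) && (c %| y %% R)) || ((y %% q != 0) && (gcdn (y %% R) R %| c)).
Proof. by move=> def_n; rewrite inE dvd_mulp_residues gcd_dvd_mulp_residues. Qed.

End NeighbourhoodResidues.

Lemma card_lt_inj_avoid (T : finType) (A B : {set T}) (f : T -> T) (z : T) :
  {in B &, injective f} -> {in B, forall x, f x \in A :\ z} -> z \in A ->
  #|B| < #|A|.
Proof.
move=> f_inj f_BA z_A; rewrite (cardsD1 z A) z_A add1n ltnS -(card_in_imset f_inj).
by apply/subset_leq_card/subsetP => _ /imsetP [x x_B ->]; apply: f_BA.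
Qed.

(* The product p*q*R is positive: R <> 0 since gcd(p, 0) = p is not 1. *)
Lemma pqR_gt0 {p q R : nat} : prime p -> prime q -> coprime p R -> 0 < p * (q * R).
Proof.
move=> p_pr q_pr cop_pR; rewrite !muln_gt0 (prime_gt0 p_pr) (prime_gt0 q_pr) lt0n.
by apply: contraTneq cop_pR => ->; rewrite /coprime gcdn0 neq_ltn prime_gt1 ?orbT.
Qed.

Section DegreeComparison.

Variables p q R c : nat.
Hypotheses (p_pr : prime p) (q_pr : prime q) (lt_pq : p < q).
Hypotheses (cop_pR : coprime p R) (cop_qR : coprime q R) (dvd_cR : c %| R).

Local Notation n := (p * (q * R)).

Let neq_pq : p != q. Proof. by rewrite neq_ltn lt_pq. Qed.

Let cop_p_qR : coprime p (q * R).
Proof. by rewrite coprimeMr cop_pR andbT prime_coprime // dvdn_prime2. Qed.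

Let n_gt0 : 0 < n := pqR_gt0 p_pr q_pr cop_pR.

Let mem_nbhd_cp (y : 'I_n) : (y \in pg_nbhd n (c * p)) =
  ((y %% p == 0) && (c %| y %% R)) || ((y %% q != 0) && (gcdn (y %% R) R %| c)).
Proof. exact: mem_nbhd_mulp. Qed.

Let mem_nbhd_cq (y : 'I_n) : (y \in pg_nbhd n (c * q)) =
  ((y %% q == 0) && (c %| y %% R)) || ((y %% p != 0) && (gcdn (y %% R) R %| c)).
Proof. by apply: mem_nbhd_mulp; rewrite 1?eq_sym // mulnCA. Qed.

Definition crt3_ord (u v w : nat) : 'I_n := Ordinal (ltn_crt3 p q R u v w n_gt0).

Definition fold_q (y : 'I_n) : 'I_n :=
  if y %% q == 0 then crt3_ord 0 (y %% p) (y %% R) else y.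

Lemma fold_q_modp y : fold_q y %% p = if y %% q == 0 then 0 else y %% p.
Proof. by rewrite /fold_q; case: ifP => //= _; rewrite crt3_modp // mod0n. Qed.

Lemma fold_q_modq y : fold_q y %% q = if y %% q == 0 then y %% p else y %% q.
Proof.
rewrite /fold_q; case: ifP => //= _; rewrite crt3_modq // modn_small //.
exact: ltn_trans (ltn_pmod _ (prime_gt0 p_pr)) lt_pq.
Qed.

Lemma fold_q_modR y : fold_q y %% R = y %% R.
Proof. by rewrite /fold_q; case: ifP => //= _; rewrite crt3_modR // modn_mod. Qed.

Lemma nbhd_cq_modp (y : 'I_n) :
  y \in pg_nbhd n (c * q) -> y %% q != 0 -> y %% p != 0.
Proof. by rewrite mem_nbhd_cq => /orP [/andP [/eqP-> _]|/andP [] //]; rewrite eqxx. Qed.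

(* The point with residues 0, q - 1, 1 lies next to c*p but outside the image of fold_q. *)
Definition missed : 'I_n := crt3_ord 0 q.-1 1.

Lemma missed_in_nbhd : missed \in pg_nbhd n (c * p).
Proof.
rewrite mem_nbhd_cp /= crt3_modq // crt3_modR // gcdn_modl gcd1n dvd1n andbT.
have lt_q1 : q.-1 < q by rewrite ltn_predL prime_gt0.
have q1_neq0 : q.-1 != 0 by rewrite -lt0n -ltnS prednK ?prime_gt0 ?prime_gt1.
by rewrite (modn_small lt_q1) q1_neq0 orbT.
Qed.

Lemma fold_q_nbhd :
  {in pg_nbhd n (c * q), forall y, fold_q y \in pg_nbhd n (c * p) :\ missed}.
Proof.
move=> y y_in; rewrite mem_nbhd_cq in y_in.
rewrite in_setD1 mem_nbhd_cp fold_q_modp fold_q_modq fold_q_modR; apply/andP; split.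
  apply/eqP => /(congr1 (fun x : 'I_n => (val x %% p, val x %% q))) /=.
  have lt_q1 : q.-1 < q by rewrite ltn_predL prime_gt0.
  rewrite fold_q_modp fold_q_modq crt3_modp // crt3_modq // mod0n (modn_small lt_q1).
  case: ifP y_in => [_ _ /(congr1 snd) /= ymodp|_ y_in /(congr1 fst) /= ymodp0].
    (* The new q-residue is y %% p < p <= q - 1. *)
    move: (ltn_pmod y (prime_gt0 p_pr)); rewrite ymodp ltnNge -ltnS.
    by rewrite prednK ?prime_gt0 ?lt_pq.
  by move: y_in; rewrite ymodp0.
case: ifP y_in => [_|yq_neq0] /= y_in; first by [].
by case/andP: y_in => _ ->; rewrite yq_neq0 orbT.
Qed.

(* The residues modulo p, q, R of y are recovered from those of fold_q y. *)
Lemma fold_q_inj : {in pg_nbhd n (c * q) &, injective fold_q}.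
Proof.
move=> y y' y_in y'_in eq_fold.
have eq_res m : fold_q y %% m = fold_q y' %% m by rewrite eq_fold.
have eq_R : y %% R = y' %% R by rewrite -fold_q_modR (eq_res R) fold_q_modR.
have [eq_p eq_q] : y %% p = y' %% p /\ y %% q = y' %% q.
  move: (eq_res p) (eq_res q); rewrite !fold_q_modp !fold_q_modq.
  have [y_p y'_p] := (nbhd_cq_modp y y_in, nbhd_cq_modp y' y'_in).
  case: ifPn => [/eqP yq0|/y_p yp_neq0]; case: ifPn => [/eqP y'q0|/y'_p y'p_neq0].
  - by rewrite yq0 y'q0.
  - by move=> /esym/eqP; rewrite (negPf y'p_neq0).
  - by move=> /eqP; rewrite (negPf yp_neq0).
  - by [].
apply: val_inj => /=; rewrite -(modn_small (ltn_ord y)) -(modn_small (ltn_ord y')).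
exact: eqn_mod3.
Qed.

Lemma card_nbhd_lt : #|pg_nbhd n (c * q)| < #|pg_nbhd n (c * p)|.
Proof. exact: card_lt_inj_avoid fold_q_inj fold_q_nbhd missed_in_nbhd. Qed.

End DegreeComparison.

Lemma prime_ratio {a b p q : nat} : prime p -> prime q -> a * q = b * p -> a < b ->
  p < q /\ exists2 c, a = c * p & b = c * q.
Proof.
move=> p_pr q_pr eq_ab lt_ab; have [p_gt0 q_gt0] := (prime_gt0 p_pr, prime_gt0 q_pr).
have lt_pq : p < q.
  rewrite ltnNge; apply/negP => le_qp; move/eqP: eq_ab; apply/negP.
  by rewrite neq_ltn (leq_ltn_trans (leq_mul (leqnn a) le_qp)) // ltn_pmul2r.
have cop_qp : coprime q p by rewrite prime_coprime // dvdn_prime2 // gtn_eqF.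
have /dvdnP [c def_b] : q %| b by rewrite -(Gauss_dvdl b cop_qp) -eq_ab dvdn_mull.
split=> //; exists c => //.
by apply/eqP; rewrite -(eqn_pmul2r q_gt0) eq_ab def_b mulnAC.
Qed.

Lemma dvdn_cofactor {c p q R : nat} : coprime p q -> 0 < p -> 0 < q ->
  c * p %| p * (q * R) -> c * q %| p * (q * R) -> c %| R.
Proof.
move=> cop_pq p_gt0 q_gt0 dvd_cp dvd_cq.
have dvd_c_qR : c %| q * R by rewrite -(dvdn_pmul2r p_gt0) [q * R * p]mulnC.
have dvd_c_pR : c %| p * R by rewrite -(dvdn_pmul2r q_gt0) mulnAC -mulnA.
by rewrite -[R]mul1n -(eqnP cop_pq) gcdnC muln_gcdl dvdn_gcd dvd_c_qR dvd_c_pR.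
Qed.

Lemma prod_split_primes {s : seq nat} {p q : nat} :
  all prime s -> uniq s -> p \in s -> q \in s -> p != q ->
  exists R, [/\ \prod_(t <- s) t = p * (q * R), coprime p R & coprime q R].
Proof.
move=> s_pr s_uniq p_s q_s neq_pq; set r := rem q (rem p s).
have q_rem : q \in rem p s by rewrite (mem_rem_uniq _ s_uniq) inE eq_sym neq_pq.
have r_pr : all prime r by apply/allP => t /mem_rem /mem_rem; apply: (allP s_pr).
exists (\prod_(t <- r) t); split.
- by rewrite (big_rem _ p_s) (big_rem _ q_rem).
- apply: coprime_prime_prod => //; first exact: (allP s_pr).
  by apply: contraFN (mem_rem_uniqF p s_uniq) => /mem_rem.
- apply: coprime_prime_prod => //; first exact: (allP s_pr).
  by rewrite mem_rem_uniqF // rem_uniq.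
Qed.

Theorem lemma2p4 (s : seq nat) (n a b k l : nat) :
  all prime s -> uniq s -> n = \prod_(p <- s) p ->
  a %| n -> b %| n -> a != 1 -> a != n -> b != 1 -> b != n -> a != b ->
  k < size s -> l < size s ->
  a * nth 0 s l = b * nth 0 s k ->
  a < b -> pg_deg n b < pg_deg n a.
Proof.
move=> s_pr s_uniq def_n dvd_an dvd_bn _ neq_an _ neq_bn _ k_lt l_lt eq_ab lt_ab.
set p := nth 0 s k in eq_ab; set q := nth 0 s l in eq_ab.
have [p_s q_s] : p \in s /\ q \in s by split; apply: mem_nth.
have [p_pr q_pr] : prime p /\ prime q by split; apply: (allP s_pr).
have [lt_pq [c def_a def_b]] := prime_ratio p_pr q_pr eq_ab lt_ab.
have neq_pq : p != q by rewrite ltn_eqF.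
have [R [def_prod cop_pR cop_qR]] := prod_split_primes s_pr s_uniq p_s q_s neq_pq.
rewrite def_prod in def_n; subst n a b.
have cop_pq : coprime p q by rewrite prime_coprime // dvdn_prime2.
have dvd_cR := dvdn_cofactor cop_pq (prime_gt0 p_pr) (prime_gt0 q_pr) dvd_an dvd_bn.
have n_gt0 := pqR_gt0 p_pr q_pr cop_pR.
have lt_a_n : c * p < p * (q * R) by rewrite ltn_neqAle neq_an dvdn_leq.
have lt_b_n : c * q < p * (q * R) by rewrite ltn_neqAle neq_bn dvdn_leq.
by rewrite -ltnS -!card_pg_nbhd // card_nbhd_lt.
Qed.
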